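(* Let $(\mathfrak g,[\cdot,\cdot],\varepsilon,B)$ be a quadratic color Lie algebra and let $\theta$ be an even, invertible, $B$-symmetric element of the centroid of $\mathfrak g$. Define $[x,y]_1^\theta=[\theta(x),y]$, $[x,y]_2^\theta=[\theta(x),\theta(y)]$ and $B_\theta(x,y)=B(\theta(x),y)$. Then $(\mathfrak g,[\cdot,\cdot]_1^\theta,\theta,\varepsilon,B_\theta)$ and $(\mathfrak g,[\cdot,\cdot]_2^\theta,\theta,\varepsilon,B_\theta)$ are quadratic color Hom-Lie algebras.
   Context: $\mathbb K$ is a field of characteristic zero and $\Gamma$ an abelian group. A bicharacter is a map $\varepsilon:\Gamma\times\Gamma\to\mathbb K\setminus\{0\}$ with $\varepsilon(a,b)\varepsilon(b,a)=1$, $\varepsilon(a,b+c)=\varepsilon(a,b)\varepsilon(a,c)$, $\varepsilon(a+b,c)=\varepsilon(a,c)\varepsilon(b,c)$; for homogeneous $x,y$, $\varepsilon(x,y)$ means $\varepsilon(\deg x,\deg y)$. A color Hom-Lie algebra $(\mathfrak g,[\cdot,\cdot],\alpha,\varepsilon)$ is a $\Gamma$-graded vector space with even (degree-preserving) bilinear bracket and even linear $\alpha$ such that $[x,y]=-\varepsilon(x,y)[y,x]$ and $\varepsilon(z,x)[\alpha(x),[y,z]]+\varepsilon(x,y)[\alpha(y),[z,x]]+\varepsilon(y,z)[\alpha(z),[x,y]]=0$ for homogeneous $x,y,z$; a color Lie algebra $(\mathfrak g,[\cdot,\cdot],\varepsilon)$ is the case $\alpha=\mathrm{id}$. A color Hom-Lie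 algebra is quadratic, written $(\mathfrak g,[\cdot,\cdot],\alpha,\varepsilon,B)$, if $B$ is a nondegenerate bilinear form which is $\varepsilon$-symmetric ($B(x,y)=\varepsilon(x,y)B(y,x)$), invariant ($B([x,y],z)=B(x,[y,z])$), and $B(\alpha(x),y)=B(x,\alpha(y))$; a quadratic color Lie algebra is the case $\alpha=\mathrm{id}$. The centroid consists of linear maps $\theta$ with $\theta([x,y])=[\theta(x),y]=\varepsilon(\theta,x)[x,\theta(y)]$; $\theta$ is $B$-symmetric if $B(\theta(x),y)=B(x,\theta(y))$. *)

From mathcomp Require Import all_boot all_order all_algebra.
Set Implicit Arguments. Unset Strict Implicit. Unset Printing Implicit Defensive.
Import Order.TTheory GRing.Theory Num.Theory.
Local Open Scope ring_scope.

Section ColorDefs.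
Variables (Γ : zmodType) (K : fieldType) (V : lmodType K).

Definition linmap (f : V -> V) : Prop :=
  forall (k : K) (x y : V), f (k *: x + y) = k *: f x + f y.

Definition bilin_map (br : V -> V -> V) : Prop :=
  (forall (x : V) (k : K) (y z : V), br x (k *: y + z) = k *: br x y + br x z) /\
  (forall (y : V) (k : K) (x z : V), br (k *: x + z) y = k *: br x y + br z y).

Definition bilin_form (B : V -> V -> K) : Prop :=
  (forall (x : V) (k : K) (y z : V), B x (k *: y + z) = k * B x y + B x z) /\
  (forall (y : V) (k : K) (x z : V), B (k *: x + z) y = k * B x y + B z y).

(* A Γ-grading V = ⊕_a V_a, given by the family of projections pr a : V -> V_a. *)
Definition grading (pr : Γ -> V -> V) : Prop :=
  [/\ forall a, linmap (pr a),
      forall a b v, pr a (pr b v) = if a == b then pr b v else 0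
    & forall v, exists s : seq Γ, uniq s /\ v = \sum_(a <- s) pr a v].

Definition homog (pr : Γ -> V -> V) (a : Γ) (x : V) : Prop := pr a x = x.

Definition bicharacter (eps : Γ -> Γ -> K) : Prop :=
  [/\ forall a b, eps a b != 0,
      forall a b, eps a b * eps b a = 1,
      forall a b c, eps a (b + c) = eps a b * eps a c
    & forall a b c, eps (a + b) c = eps a c * eps b c].

Definition even_map (pr : Γ -> V -> V) (f : V -> V) : Prop :=
  forall a x, homog pr a x -> homog pr a (f x).

Definition color_HomLie (pr : Γ -> V -> V) (br : V -> V -> V) (alpha : V -> V)
    (eps : Γ -> Γ -> K) : Prop :=
  [/\ bilin_map br, linmap alpha /\ even_map pr alpha,
      (forall a b x y, homog pr a x -> homog pr b y -> homog pr (a + b) (br x y)),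
      (forall a b x y, homog pr a x -> homog pr b y -> br x y = - (eps a b *: br y x))
    & (forall a b c x y z, homog pr a x -> homog pr b y -> homog pr c z ->
         eps c a *: br (alpha x) (br y z) + eps a b *: br (alpha y) (br z x)
         + eps b c *: br (alpha z) (br x y) = 0)].

Definition quad_color_HomLie (pr : Γ -> V -> V) (br : V -> V -> V) (alpha : V -> V)
    (eps : Γ -> Γ -> K) (B : V -> V -> K) : Prop :=
  [/\ color_HomLie pr br alpha eps /\ bilin_form B,
      (forall x, (forall y, B x y = 0) -> x = 0),
      (forall a b x y, homog pr a x -> homog pr b y -> B x y = eps a b * B y x),
      (forall x y z, B (br x y) z = B x (br y z))
    & (forall x y, B (alpha x) y = B x (alpha y))].

Definition quad_color_Lie (pr : Γ -> V -> V) (br : V -> V -> V)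
    (eps : Γ -> Γ -> K) (B : V -> V -> K) : Prop :=
  quad_color_HomLie pr br id eps B.

Definition centroid_elem (pr : Γ -> V -> V) (br : V -> V -> V) (eps : Γ -> Γ -> K)
    (d : Γ) (theta : V -> V) : Prop :=
  [/\ linmap theta,
      (forall a x, homog pr a x -> homog pr (a + d) (theta x)),
      (forall x y, theta (br x y) = br (theta x) y)
    & (forall a x y, homog pr a x -> br (theta x) y = eps d a *: br x (theta y))].

Definition B_symmetric (B : V -> V -> K) (theta : V -> V) : Prop :=
  forall x y, B (theta x) y = B x (theta y).

End ColorDefs.

From mathcomp Require Import all_boot all_order all_algebra.
Set Implicit Arguments. Unset Strict Implicit. Unset Printing Implicit Defensive.
Import GRing.Theory.
Local Open Scope ring_scope.

(* An even element θ of the centroid commutes with the bracket in both slots,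
   so [θ^m x, θ^n y] = θ^(m+n) [x, y]. Hence for the twisted brackets
   [x,y]_1 = [θx, y] and [x,y]_2 = [θx, θy] the ε-skew-symmetry is inherited
   from [.,.], and each term of the Hom-Jacobi sum with α = θ is a fixed power
   of θ applied to the corresponding term of the Jacobi identity of g.  The
   form B(θ., .) inherits ε-symmetry and invariance from the B-symmetry of θ,
   and nondegeneracy from its injectivity. *)

Definition twist_br (V : Type) (theta : V -> V) (br : V -> V -> V) (m n : nat) :=
  fun x y => br (iter m theta x) (iter n theta y).

Section LinearMaps.
Variables (Γ : zmodType) (K : fieldType) (V : lmodType K).
Variable f : V -> V.
Hypothesis f_lin : linmap f.

Lemma linmapD u v : f (u + v) = f u + f v.
Proof. by have := f_lin 1 u v; rewrite !scale1r. Qed.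

Lemma linmap0 : f 0 = 0.
Proof. by apply: (addrI (f 0)); rewrite -linmapD !addr0. Qed.

Lemma linmapZ k u : f (k *: u) = k *: f u.
Proof. by rewrite -[k *: u]addr0 f_lin linmap0 addr0. Qed.

Lemma linmapN u : f (- u) = - f u.
Proof. by rewrite -scaleN1r linmapZ scaleN1r. Qed.

Lemma linmap_iter n : linmap (iter n f).
Proof.
elim: n => [|n IHn] k x y //=.
by rewrite IHn f_lin.
Qed.

Lemma even_map_iter (pr : Γ -> V -> V) n : even_map pr f -> even_map pr (iter n f).
Proof. by move=> f_even; elim: n => [|n IHn] a x hx //=; apply/f_even/IHn. Qed.

End LinearMaps.

Lemma bichar0l (Γ : zmodType) (K : fieldType) (eps : Γ -> Γ -> K) a :
  bicharacter eps -> eps 0 a = 1.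
Proof.
case=> eps_neq0 _ _ eps_addl; apply: (mulfI (eps_neq0 0 a)).
by rewrite mulr1 -eps_addl addr0.
Qed.

Section EvenCentroid.
Variables (Γ : zmodType) (K : fieldType) (V : lmodType K).
Variables (pr : Γ -> V -> V) (br : V -> V -> V) (eps : Γ -> Γ -> K) (theta : V -> V).
Hypotheses (eps_bichar : bicharacter eps) (theta_centroid : centroid_elem pr br eps 0 theta).

Lemma centroid0_brl x y : br (theta x) y = theta (br x y).
Proof. by case: theta_centroid => _ _ ->. Qed.

Lemma centroid0_brr a x y : homog pr a x -> br x (theta y) = theta (br x y).
Proof.
case: theta_centroid => _ _ _ th_brr hx.
by rewrite -centroid0_brl (th_brr _ _ _ hx) bichar0l // scale1r.
Qed.

Lemma centroid0_br_iter a m n x y : homog pr a x ->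
  br (iter m theta x) (iter n theta y) = iter (m + n) theta (br x y).
Proof.
move=> hx; rewrite iterD; elim: m => [|m IHm] /=; last by rewrite centroid0_brl IHm.
elim: n => [|n IHn] //=.
by rewrite (centroid0_brr _ hx) IHn.
Qed.

End EvenCentroid.

Section Twist.
Variables (Γ : zmodType) (K : fieldType) (V : lmodType K).
Variables (pr : Γ -> V -> V) (br : V -> V -> V) (eps : Γ -> Γ -> K) (theta : V -> V).
Hypotheses (eps_bichar : bicharacter eps) (br_Lie : color_HomLie pr br id eps).
Hypotheses (theta_centroid : centroid_elem pr br eps 0 theta)
  (theta_even : even_map pr theta).

Let theta_lin : linmap theta. Proof. by case: theta_centroid. Qed.

Lemma twist_brE m n a x y : homog pr a x ->
  twist_br theta br m n x y = iter (m + n) theta (br x y).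
Proof. exact: (centroid0_br_iter eps_bichar theta_centroid). Qed.

Lemma twist_br_jacobi m n a b x y z : homog pr a x -> homog pr b y ->
  twist_br theta br m n (theta x) (twist_br theta br m n y z)
  = iter (m + (n + (m + n))).+1 theta (br x (br y z)).
Proof.
move=> hx hy; rewrite (twist_brE _ _ _ hy) /twist_br -iterD.
by rewrite (centroid0_br_iter eps_bichar theta_centroid _ _ _ (theta_even hx))
  (centroid0_brl theta_centroid) iterSr.
Qed.

Lemma color_HomLie_twist m n : color_HomLie pr (twist_br theta br m n) theta eps.
Proof.
case: br_Lie => [[br_linr br_linl] _ br_hom br_skew br_jacobi].
have iter_lin k := linmap_iter theta_lin k.
split=> /=.
- by split=> * /=; rewrite /twist_br iter_lin ?br_linr ?br_linl.
- by [].
- by move=> a b x y hx hy; apply: br_hom; apply: even_map_iter.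
- move=> a b x y hx hy; rewrite !(twist_brE _ _ _ hx) !(twist_brE _ _ _ hy).
  by rewrite (br_skew _ _ _ _ hx hy) (linmapN (iter_lin _)) (linmapZ (iter_lin _)).
- move=> a b c x y z hx hy hz.
  rewrite (twist_br_jacobi _ _ _ hx hy) (twist_br_jacobi _ _ _ hy hz)
    (twist_br_jacobi _ _ _ hz hx).
  by rewrite -!(linmapZ (iter_lin _)) -!(linmapD (iter_lin _))
    (br_jacobi _ _ _ _ _ _ hx hy hz) (linmap0 (iter_lin _)).
Qed.

Variable B : V -> V -> K.
Hypotheses (B_invariant : forall x y z, B (br x y) z = B x (br y z))
  (B_theta : B_symmetric B theta).

Lemma twist_br10_invariant x y z :
  B (theta (twist_br theta br 1 0 x y)) z = B (theta x) (twist_br theta br 1 0 y z).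
Proof.
rewrite /twist_br /= -(centroid0_brl theta_centroid) B_invariant B_theta.
by rewrite (centroid0_brl theta_centroid).
Qed.

Lemma twist_br11_invariant x y z :
  B (theta (twist_br theta br 1 1 x y)) z = B (theta x) (twist_br theta br 1 1 y z).
Proof. by rewrite B_theta B_invariant. Qed.

End Twist.

Lemma quad_color_HomLie_twist_form (Γ : zmodType) (K : fieldType) (V : lmodType K)
    (pr : Γ -> V -> V) (br br' : V -> V -> V) (alpha theta : V -> V)
    (eps : Γ -> Γ -> K) (B : V -> V -> K) :
  quad_color_HomLie pr br alpha eps B ->
  linmap theta -> even_map pr theta -> injective theta -> B_symmetric B theta ->
  color_HomLie pr br' theta eps ->
  (forall x y z, B (theta (br' x y)) z = B (theta x) (br' y z)) ->
  quad_color_HomLie pr br' theta eps (fun x y => B (theta x) y).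
Proof.
move=> [[_ [B_linr B_linl]] B_nondeg B_sym _ _] th_lin th_even th_inj B_theta
  br'_HomLie B'_invariant.
split=> //.
- split=> //; split=> * /=; first by rewrite B_linr.
  by rewrite th_lin B_linl.
- move=> x /B_nondeg th_x0; apply: th_inj.
  by rewrite th_x0 (linmap0 th_lin).
- by move=> a b x y hx hy; rewrite (B_sym _ _ _ _ (th_even _ _ hx) hy) B_theta.
Qed.

Theorem mainTheorem4 (Γ : zmodType) (K : fieldType) (V : lmodType K)
    (pr : Γ -> V -> V) (br : V -> V -> V) (eps : Γ -> Γ -> K)
    (B : V -> V -> K) (theta : V -> V) :
  [pchar K] =i pred0 ->
  grading pr -> bicharacter eps ->
  quad_color_Lie pr br eps B ->
  centroid_elem pr br eps 0 theta -> even_map pr theta ->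
  bijective theta -> B_symmetric B theta ->
  quad_color_HomLie pr (fun x y => br (theta x) y) theta eps (fun x y => B (theta x) y) /\
  quad_color_HomLie pr (fun x y => br (theta x) (theta y)) theta eps
    (fun x y => B (theta x) y).
Proof.
move=> _ _ eps_bichar br_quad th_centroid th_even [th_inv thK _] B_theta.
have br_Lie : color_HomLie pr br id eps by case: br_quad => [[]].
have B_invariant : forall x y z, B (br x y) z = B x (br y z) by case: br_quad.
have th_lin : linmap theta by case: th_centroid.
have th_inj := can_inj thK.
split.
- apply: (quad_color_HomLie_twist_form br_quad th_lin th_even th_inj B_theta).
  + exact: (color_HomLie_twist eps_bichar br_Lie th_centroid th_even 1 0).
  + exact: (twist_br10_invariant th_centroid B_invariant B_theta).
- apply: (quad_color_HomLie_twist_form br_quad th_lin th_even th_inj B_theta).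
  + exact: (color_HomLie_twist eps_bichar br_Lie th_centroid th_even 1 1).
  + exact: (twist_br11_invariant B_invariant B_theta).
Qed.
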